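(* Let $F:\mathbb{R}\to[0,1]$ be a distribution function. For every $x\in\mathbb{R}$, \[\big(F(x-),F(x)\big)\subseteq\{\alpha\in(0,1):x=F^{\wedge}(\alpha)\}\subseteq\big[F(x-),F(x)\big].\] In particular, if $x_1\neq x_2$ then $\big(F(x_1-),F(x_1)\big)\cap\big(F(x_2-),F(x_2)\big)=\emptyset$. Moreover, \begin{align*} \bigcup_{x\in J_F}\big(F(x-),F(x)\big)&=\{\alpha\in(0,1):\Delta F(F^{\wedge}(\alpha))>0\text{ and }\alpha=F_\lambda(F^{\wedge}(\alpha))\text{ for some }0<\lambda<1\}\\ &=\{F_\lambda(x):0<\lambda<1,\ x\in J_F\}=R_F\big(J_F\times(0,1)\big)\\ &=(0,1)\setminus\big(F(\mathbb{R})\cup F^{-}(\mathbb{R})\big), \end{align*} where the union is disjoint. Consequently, writing $J_F=\{x_n:n\in M\}$ with pairwise distinct $x_n$, where $M=\{1,\dots,m\}$ is finite or $M=\mathbb{N}$, the map \[\Phi_F:(0,1)^M\to\prod_{n\in M}\big(F(x_n-),F(x_n)\big),\qquad (\lambda_n)_{n\in M}\mapsto \big(F_{\lambda_n}(x_n)\big)_{n\in M}\] is well defined and bijective, with inverse \[\Phi_F^{-1}\big((\alpha_n)_{n\in M}\big)=\Big(\frac{\alpha_n-F(F^{\wedge}(\alpha_n)-)}{\Delta F(F^{\wedge}(\alpha_n))}\Big)_{n\in M}.\]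
   Context: A distribution function is a non-decreasing, right-continuous $F:\mathbb{R}\to[0,1]$ with $\lim_{x\to-\infty}F(x)=0$, $\lim_{x\to\infty}F(x)=1$. Write $F(x-)=\lim_{z\uparrow x}F(z)$, $\Delta F(x)=F(x)-F(x-)$, and $F^{-}:\mathbb{R}\to[0,1]$, $x\mapsto F(x-)$. $J_F=\{x\in\mathbb{R}:\Delta F(x)>0\}$ is the (at most countable) set of jumps of $F$. For $\lambda\in[0,1]$, $F_\lambda(x)=F(x-)+\lambda\Delta F(x)$, and the Rüschendorf transform is $R_F:\mathbb{R}\times[0,1]\to\mathbb{R}$, $R_F(x,\lambda)=F_\lambda(x)$. For $\alpha\in(0,1)$, $F^{\wedge}(\alpha)=\inf\{x\in\mathbb{R}:F(x)\ge\alpha\}$. *)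

From HB Require Import structures.
From mathcomp Require Import all_boot all_order all_algebra.
From mathcomp Require Import all_classical all_reals all_analysis.
Set Implicit Arguments. Unset Strict Implicit. Unset Printing Implicit Defensive.
Import Order.TTheory GRing.Theory Num.Theory.
Import numFieldNormedType.Exports.
Local Open Scope classical_set_scope.
Local Open Scope ring_scope.

Section DistrDefs.
Variable R : realType.
Implicit Types (F : R -> R) (x a l : R).

Definition distribution_function F : Prop :=
  [/\ (forall x, 0 <= F x <= 1),
      {homo F : x y / x <= y},
      (forall x, F z @[z --> x^'+] --> F x),
      F z @[z --> -oo] --> (0 : R) &
      F z @[z --> +oo] --> (1 : R)].

Definition Fleft F x : R := lim (F z @[z --> x^'-]).

Definition Fjump F x : R := F x - Fleft F x.

Definition jumps F : set R := [set x | 0 < Fjump F x].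

Definition Flam F l x : R := Fleft F x + l * Fjump F x.

Definition RF F (p : R * R) : R := Flam F p.2 p.1.

Definition Fwedge F a : R := inf [set x | a <= F x].

Definition unit_oo : set R := [set l | 0 < l < 1].

Definition jump_oo F x : set R := [set a | Fleft F x < a < F x].
Definition jump_cc F x : set R := [set a | Fleft F x <= a <= F x].

End DistrDefs.
Arguments unit_oo {R}.

(** The generalized inverse sends every level of the open jump interval
    (F(x-), F(x)) back to x: F reaches such a level at x but not before.
    Conversely, a level in (0,1) missed by both F and F^- lies strictly
    inside [F(F^(a)-), F(F^(a))], so it is in the open jump interval at
    F^(a). *)
From HB Require Import structures.
From mathcomp Require Import all_boot all_order all_algebra.
From mathcomp Require Import all_classical all_reals all_analysis.
Import Order.TTheory GRing.Theory Num.Theory.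
Import numFieldNormedType.Exports.
Local Open Scope classical_set_scope.
Local Open Scope ring_scope.

Section DistributionFunction.
Context {R : realType} {F : R -> R}.
Hypothesis hF : distribution_function F.

Let F_ge0_le1 x : 0 <= F x <= 1. Proof. by case: hF. Qed.
Let F_homo : {homo F : x y / x <= y}. Proof. by case: hF. Qed.
Let F_cvg_right x : F z @[z --> x^'+] --> F x. Proof. by case: hF. Qed.
Let F_cvg_ninfty : F z @[z --> -oo] --> (0 : R). Proof. by case: hF. Qed.
Let F_cvg_pinfty : F z @[z --> +oo] --> (1 : R). Proof. by case: hF. Qed.

Lemma Fleft_cvg x : cvg (F z @[z --> x^'-]).
Proof.
apply: nondecreasing_at_left_is_cvgr.
  by apply: filterE => y a b _ _; exact: F_homo.
apply: filterE => y; exists (F x) => z [s] /=.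
by rewrite in_itv/= => /andP[_ /ltW sx] <-; exact: F_homo.
Qed.

Lemma le_Fleft {x z} : z < x -> F z <= Fleft F x.
Proof.
move=> zx; apply: limr_ge; first exact: Fleft_cvg.
by apply: filterS (nbhs_left_gt zx) => t /ltW; exact: F_homo.
Qed.

Lemma Fleft_le x c : (forall z, z < x -> F z <= c) -> Fleft F x <= c.
Proof.
move=> Fc; apply: limr_le; first exact: Fleft_cvg.
by apply: filterS (nbhs_left_lt x) => t; exact: Fc.
Qed.

Lemma Fleft_ge0 x : 0 <= Fleft F x.
Proof.
have /andP[F0 _] := F_ge0_le1 (x - 1).
by apply: (le_trans F0); apply: le_Fleft; rewrite ltrBlDr ltrDl.
Qed.

Lemma Fleft_homo : {homo Fleft F : x y / x <= y}.
Proof.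
by move=> x y xy; apply: Fleft_le => z zx; apply: le_Fleft; exact: lt_le_trans xy.
Qed.

Section GeneralizedInverse.
Variable a : R.
Hypothesis a01 : unit_oo a.

Lemma has_inf_upper_level : has_inf [set x | a <= F x].
Proof.
case/andP: a01 => a0 a1; split.
  have [t /ltW at_] := filter_ex (cvgr_gt (f:=F) _ F_cvg_pinfty _ a1).
  by exists t.
have [t Fta] := filter_ex (cvgr_lt (f:=F) _ F_cvg_ninfty _ a0).
exists t => y /= ay; rewrite leNgt; apply/negP => yt.
by have := le_lt_trans (le_trans ay (F_homo _ _ (ltW yt))) Fta; rewrite ltxx.
Qed.

Lemma Fwedge_le x : a <= F x -> Fwedge F a <= x.
Proof. by have [_ lb] := has_inf_upper_level; exact: ge_inf lb x. Qed.

Lemma F_lt_Fwedge z : z < Fwedge F a -> F z < a.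
Proof.
move=> zw; rewrite ltNge; apply/negP => /Fwedge_le.
by rewrite leNgt zw.
Qed.

(* F >= a on (F^(a), +oo) by definition of the infimum; right continuity passes this to F^(a). *)
Lemma le_F_Fwedge : a <= F (Fwedge F a).
Proof.
rewrite -(cvg_lim _ (F_cvg_right (Fwedge F a))); last exact: Rhausdorff.
apply: limr_ge; first by apply/cvg_ex; eexists; exact: F_cvg_right.
apply: filterS (nbhs_right_gt (Fwedge F a)) => t wt.
have wt0 : 0 < t - Fwedge F a by rewrite subr_gt0.
have [e ae et] := inf_adherent wt0 has_inf_upper_level.
apply: le_trans ae (F_homo _ _ _); apply: ltW.
by move: et; rewrite addrC subrK.
Qed.

Lemma Fleft_Fwedge_le : Fleft F (Fwedge F a) <= a.
Proof. by apply: Fleft_le => z /F_lt_Fwedge /ltW. Qed.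

Lemma Fwedge_eq x : a <= F x -> (forall z, z < x -> F z < a) -> Fwedge F a = x.
Proof.
move=> ax Fa; apply/eqP; rewrite eq_le Fwedge_le //=.
have [ne _] := has_inf_upper_level.
apply: lb_le_inf => // y /= ay; rewrite leNgt; apply/negP => /Fa.
by rewrite ltNge ay.
Qed.

Lemma jump_cc_Fwedge : jump_cc F (Fwedge F a) a.
Proof. by apply/andP; split; [exact: Fleft_Fwedge_le | exact: le_F_Fwedge]. Qed.

End GeneralizedInverse.

Section JumpIntervals.
Implicit Types (x a l : R).

Lemma jump_oo_unit_oo {x a} : jump_oo F x a -> unit_oo a.
Proof.
case/andP=> xa ax; apply/andP; split; first exact: le_lt_trans (Fleft_ge0 x) xa.
by case/andP: (F_ge0_le1 x) => _; exact: lt_le_trans.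
Qed.

Lemma Fwedge_jump_oo {x a} : jump_oo F x a -> Fwedge F a = x.
Proof.
move=> xa; have /andP[Fxa aFx] := xa.
apply: (Fwedge_eq _ (jump_oo_unit_oo xa) _ (ltW aFx)) => z zx.
exact: le_lt_trans (le_Fleft zx) Fxa.
Qed.

Lemma jumps_jump_oo {x a} : jump_oo F x a -> jumps F x.
Proof. by case/andP=> xa ax; rewrite /jumps /Fjump /= subr_gt0 (lt_trans xa ax). Qed.

Lemma jump_oo_disjoint x1 x2 : x1 <> x2 -> jump_oo F x1 `&` jump_oo F x2 = set0.
Proof.
move=> x12; rewrite -subset0 => a [/Fwedge_jump_oo e1 /Fwedge_jump_oo e2].
by apply: x12; rewrite -e1 -e2.
Qed.

Lemma Flam_jump_oo {x l} : jumps F x -> unit_oo l -> jump_oo F x (Flam F l x).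
Proof.
rewrite /jumps /unit_oo /jump_oo /Flam /= => Jx /andP[l0 l1]; apply/andP; split.
  by rewrite ltrDl mulr_gt0.
by rewrite -[ltRHS](subrK (Fleft F x)) [_ + Fleft F x]addrC ltrD2l gtr_pMl.
Qed.

Definition jump_level x a : R := (a - Fleft F x) / Fjump F x.

Lemma jump_levelK {x a} : jump_oo F x a ->
  unit_oo (jump_level x a) /\ Flam F (jump_level x a) x = a.
Proof.
move=> xa; have Jx := jumps_jump_oo xa; move: xa Jx.
rewrite /jump_oo /jumps /unit_oo /jump_level /Flam /= => /andP[xa ax] Jx; split.
  apply/andP; split; first by rewrite divr_gt0 // subr_gt0.
  by rewrite ltr_pdivrMr // mul1r /Fjump ltrD2r.
by rewrite -mulrA mulVf ?gt_eqF // mulr1 addrC subrK.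
Qed.

Lemma FlamK x l : jumps F x -> jump_level x (Flam F l x) = l.
Proof. by rewrite /jump_level /Flam addrAC subrr add0r => Jx; rewrite mulfK ?gt_eqF. Qed.

Lemma jump_oo_notin_range {x a} :
  jump_oo F x a -> ~ (range F `|` range (Fleft F)) a.
Proof.
case/andP=> xa ax [[y _ Fy]|[y _ Fy]].
- have [yx|xy] := ltP y x.
    by have := le_lt_trans (le_Fleft yx) xa; rewrite Fy ltxx.
  by have := lt_le_trans ax (F_homo _ _ xy); rewrite Fy ltxx.
- have [xy|yx] := ltP x y.
    by have := lt_le_trans ax (le_Fleft xy); rewrite Fy ltxx.
  by have := le_lt_trans (Fleft_homo _ _ yx) xa; rewrite Fy ltxx.
Qed.

Lemma notin_range_jump_oo {a} : unit_oo a ->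
  ~ (range F `|` range (Fleft F)) a -> jump_oo F (Fwedge F a) a.
Proof.
move=> a01 a_range; have /andP[la au] := jump_cc_Fwedge _ a01.
apply/andP; split; rewrite lt_neqAle ?la ?au andbT; apply/eqP => e; apply: a_range.
  by right; exists (Fwedge F a).
by left; exists (Fwedge F a).
Qed.

End JumpIntervals.

Section JumpUnion.

Lemma bigcup_jump_oo_Fwedge : \bigcup_(x in jumps F) jump_oo F x =
  [set a | unit_oo a /\ 0 < Fjump F (Fwedge F a) /\
           exists l, unit_oo l /\ a = Flam F l (Fwedge F a)].
Proof.
apply/seteqP; split => a.
  case=> x Jx xa; have [la_in la_eq] := jump_levelK xa.
  split; first exact: jump_oo_unit_oo xa.
  by rewrite (Fwedge_jump_oo xa); split => //; exists (jump_level x a).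
case=> _ [Jw [l [l01 ->]]]; exists (Fwedge F a) => //.
exact: Flam_jump_oo.
Qed.

Lemma bigcup_jump_oo_Flam : \bigcup_(x in jumps F) jump_oo F x =
  [set a | exists l x, unit_oo l /\ jumps F x /\ a = Flam F l x].
Proof.
apply/seteqP; split => a.
  by case=> x Jx xa; have [la_in la_eq] := jump_levelK xa; exists (jump_level x a), x.
by case=> l [x [l01 [Jx ->]]]; exists x => //; exact: Flam_jump_oo.
Qed.

Lemma bigcup_jump_oo_RF : \bigcup_(x in jumps F) jump_oo F x =
  RF F @` (jumps F `*` unit_oo).
Proof.
rewrite bigcup_jump_oo_Flam; apply/seteqP; split => a.
  by case=> l [x [l01 [Jx ->]]]; exists (x, l).
by case=> -[x l] [Jx l01] <-; exists l, x.
Qed.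

Lemma bigcup_jump_oo_range : \bigcup_(x in jumps F) jump_oo F x =
  unit_oo `\` (range F `|` range (Fleft F)).
Proof.
apply/seteqP; split => a.
  by case=> x _ xa; split; [exact: jump_oo_unit_oo xa | exact: jump_oo_notin_range xa].
case=> a01 a_range; have wa := notin_range_jump_oo a01 a_range.
by exists (Fwedge F a) => //; exact: jumps_jump_oo wa.
Qed.

End JumpUnion.

Section JumpParametrization.
Variables (M : Type) (xs : M -> R).
Hypothesis xs_jumps : forall n, jumps F (xs n).

Definition jump_param (lam : M -> R) (n : M) : R := Flam F (lam n) (xs n).

(* The inverse does not refer to xs: the jump carrying alpha n is F^(alpha n). *)
Definition jump_param_inv (alpha : M -> R) (n : M) : R :=
  jump_level (Fwedge F (alpha n)) (alpha n).

Let unit_family := [set lam : M -> R | forall n, unit_oo (lam n)].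
Let jump_family := [set alpha : M -> R | forall n, jump_oo F (xs n) (alpha n)].

Lemma jump_paramK {lam} : unit_family lam -> jump_param_inv (jump_param lam) = lam.
Proof.
move=> lam01; apply/funext => n; rewrite /jump_param_inv /jump_param.
by rewrite (Fwedge_jump_oo (Flam_jump_oo (xs_jumps n) (lam01 n))) FlamK.
Qed.

Lemma jump_param_invK alpha : jump_family alpha ->
  unit_family (jump_param_inv alpha) /\ jump_param (jump_param_inv alpha) = alpha.
Proof.
move=> alpha_in; have inv_n n : jump_param_inv alpha n = jump_level (xs n) (alpha n).
  by rewrite /jump_param_inv (Fwedge_jump_oo (alpha_in n)).
split=> [n|]; first by rewrite inv_n; have [] := jump_levelK (alpha_in n).
by apply/funext => n; rewrite /jump_param inv_n; have [] := jump_levelK (alpha_in n).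
Qed.

Lemma jump_param_bij : set_bij unit_family jump_family jump_param.
Proof.
split.
- by move=> lam lam01 n; exact: Flam_jump_oo.
- move=> l1 l2 /set_mem l1_01 /set_mem l2_01 e.
  by rewrite -(jump_paramK l1_01) e jump_paramK.
- move=> alpha /jump_param_invK [alpha01 alphaK].
  by exists (jump_param_inv alpha).
Qed.

End JumpParametrization.

End DistributionFunction.
Theorem mainTheorem2 (R : realType) (F : R -> R) :
  distribution_function F ->
  (* (F(x-),F(x)) ⊆ {α ∈ (0,1) : x = F^∧(α)} ⊆ [F(x-),F(x)] *)
  (forall x : R,
      jump_oo F x `<=` [set a | unit_oo a /\ x = Fwedge F a] /\
      [set a | unit_oo a /\ x = Fwedge F a] `<=` jump_cc F x) /\
  (* disjointness of the open jump intervals *)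
  (forall x1 x2 : R, x1 <> x2 -> jump_oo F x1 `&` jump_oo F x2 = set0) /\
  (* the chain of set equalities *)
  (\bigcup_(x in jumps F) jump_oo F x =
     [set a | unit_oo a /\ 0 < Fjump F (Fwedge F a) /\
              exists l, unit_oo l /\ a = Flam F l (Fwedge F a)] /\
   \bigcup_(x in jumps F) jump_oo F x =
     [set a | exists l x, unit_oo l /\ jumps F x /\ a = Flam F l x] /\
   \bigcup_(x in jumps F) jump_oo F x =
     RF F @` (jumps F `*` unit_oo) /\
   \bigcup_(x in jumps F) jump_oo F x =
     unit_oo `\` (range F `|` range (Fleft F))) /\
  (* the map Φ_F for any enumeration (x_n)_{n ∈ M} of J_F without repetitions *)
  (forall (M : Type) (xs : M -> R),
      injective xs -> range xs = jumps F ->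
      let Phi := fun (lam : M -> R) (n : M) => Flam F (lam n) (xs n) in
      let Psi := fun (alpha : M -> R) (n : M) =>
        (alpha n - Fleft F (Fwedge F (alpha n))) / Fjump F (Fwedge F (alpha n)) in
      let dom := [set lam : M -> R | forall n, unit_oo (lam n)] in
      let cod := [set alpha : M -> R | forall n, jump_oo F (xs n) (alpha n)] in
      set_bij dom cod Phi /\
      (forall alpha, cod alpha -> dom (Psi alpha) /\ Phi (Psi alpha) = alpha) /\
      (forall lam, dom lam -> Psi (Phi lam) = lam)).
Proof.
move=> hF; split.
  move=> x; split=> a.
    by move=> xa; split; [exact: (jump_oo_unit_oo hF xa) | rewrite (Fwedge_jump_oo hF xa)].
  by case=> a01 ->; exact: jump_cc_Fwedge.
split; first exact: jump_oo_disjoint.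
split.
  split; first exact: bigcup_jump_oo_Fwedge.
  split; first exact: bigcup_jump_oo_Flam.
  by split; [exact: bigcup_jump_oo_RF | exact: bigcup_jump_oo_range].
move=> M xs _ xs_range Phi Psi dom cod.
have xs_jumps n : jumps F (xs n) by rewrite -xs_range; exists n.
split; first exact: jump_param_bij.
by split=> [alpha|lam]; [exact: jump_param_invK | exact: jump_paramK].
Qed.
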